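(* Let $(X,\tau)$ be a topological space, $\mathcal{V}\in T(\tau)$, $\mathcal{B}=\mathcal{B}(\mathcal{V}_\omega)$, and let $\alpha$ be an interior preserving open cover of $X$ with $U_\alpha\in\mathcal{V}$. Then every $A\in\alpha$ belongs to $\mathcal{B}$.
   Context: An open cover $\alpha$ of $X$ is interior preserving if for every $x\in X$ the set $\bigcap\{N\in\alpha:x\in N\}$ is open; then $U_\alpha\subseteq X\times X$ is the relation with $U_\alpha(x)=\bigcap\{N\in\alpha:x\in N\}$ (a transitive relation). $T(\tau)$ is the set of compatible transitive quasi-uniformities on $(X,\tau)$. For a quasi-uniformity $\mathcal{V}$, $\mathcal{V}_\omega$ is the coarsest quasi-uniformity inducing the same quasi-proximity as $\mathcal{V}$. For $N\subseteq X$, $U_N=(N\times N)\cup((X\setminus N)\times X)$, and for a compatible quasi-uniformity $\mathcal{W}$, $\mathcal{B}(\mathcal{W})=\{N\in\tau:U_N\in\mathcal{W}\}$. *)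

Definition rel (X : Type) := X -> X -> Prop.

Definition is_topology {X : Type} (tau : (X -> Prop) -> Prop) : Prop :=
  tau (fun _ => True) /\
  tau (fun _ => False) /\
  (forall F : (X -> Prop) -> Prop, (forall G, F G -> tau G) ->
      tau (fun x => exists G, F G /\ G x)) /\
  (forall G H, tau G -> tau H -> tau (fun x => G x /\ H x)) /\
  (forall G H, tau G -> (forall x, G x <-> H x) -> tau H).

Definition is_quasi_uniformity {X : Type} (U : rel X -> Prop) : Prop :=
  U (fun _ _ => True) /\
  (forall R S : rel X, U R -> (forall x y, R x y -> S x y) -> U S) /\
  (forall R S : rel X, U R -> U S -> U (fun x y => R x y /\ S x y)) /\
  (forall R : rel X, U R -> forall x, R x x) /\
  (forall R : rel X, U R -> exists S : rel X, U S /\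
      (forall x y z, S x y -> S y z -> R x z)).

Definition compatible {X : Type} (U : rel X -> Prop) (tau : (X -> Prop) -> Prop)
  : Prop :=
  forall G : X -> Prop,
    tau G <-> (forall x, G x -> exists R, U R /\ forall y, R x y -> G y).

Definition transitive_rel {X : Type} (R : rel X) : Prop :=
  forall x y z, R x y -> R y z -> R x z.

Definition is_transitive_qu {X : Type} (U : rel X -> Prop) : Prop :=
  is_quasi_uniformity U /\
  forall R, U R -> exists S, U S /\ transitive_rel S /\ forall x y, S x y -> R x y.

Definition in_T {X : Type} (tau : (X -> Prop) -> Prop) (V : rel X -> Prop) : Prop :=
  is_transitive_qu V /\ compatible V tau.

Definition qprox {X : Type} (U : rel X -> Prop) (A B : X -> Prop) : Prop :=
  forall R, U R -> exists a b, A a /\ B b /\ R a b.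

Definition same_qprox {X : Type} (U W : rel X -> Prop) : Prop :=
  forall A B : X -> Prop, qprox U A B <-> qprox W A B.

Definition is_V_omega {X : Type} (V W : rel X -> Prop) : Prop :=
  is_quasi_uniformity W /\ same_qprox V W /\
  forall W' : rel X -> Prop, is_quasi_uniformity W' -> same_qprox V W' ->
    forall R, W R -> W' R.

Definition U_N {X : Type} (N : X -> Prop) : rel X :=
  fun x y => (N x /\ N y) \/ ~ N x.

Definition B_of {X : Type} (tau : (X -> Prop) -> Prop) (W : rel X -> Prop)
  (N : X -> Prop) : Prop := tau N /\ W (U_N N).

Definition interior_preserving_open_cover {X : Type}
  (tau : (X -> Prop) -> Prop) (alpha : (X -> Prop) -> Prop) : Prop :=
  (forall N, alpha N -> tau N) /\
  (forall x, exists N, alpha N /\ N x) /\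
  (forall x, tau (fun y => forall N, alpha N -> N x -> N y)).

Definition U_alpha {X : Type} (alpha : (X -> Prop) -> Prop) : rel X :=
  fun x y => forall N, alpha N -> N x -> N y.

(* Openness of A is part of the cover hypothesis; the content is that the
   entourage U_A = (A × A) ∪ ((X \ A) × X) belongs to W = V_omega.  The
   argument only uses that W induces the same quasi-proximity as V:
   - U_alpha maps A into A, so the V-entourage U_alpha witnesses that A is
     V-far from its complement (lemma [invariant_entourage_not_near]);
   - being a proximity statement, "A is far from X \ A" transfers to W;
   - in any quasi-uniformity, A far from X \ A means some entourage R
     never leaves A from inside A, hence R ⊆ U_A and U_A is an entourage
     (lemma [U_N_of_not_near]). *)

From Stdlib Require Import Classical.

Lemma U_alpha_invariant {X : Type} (alpha : (X -> Prop) -> Prop) (A : X -> Prop) :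
  alpha A -> forall x y, A x -> U_alpha alpha x y -> A y.
Proof. intros HA x y Ax Hxy. exact (Hxy A HA Ax). Qed.

Lemma invariant_entourage_not_near {X : Type} (U : rel X -> Prop)
  (A : X -> Prop) (R : rel X) :
  U R -> (forall x y, A x -> R x y -> A y) -> ~ qprox U A (fun y => ~ A y).
Proof.
  intros HR Hinv Hnear.
  destruct (Hnear R HR) as [a [b [Aa [nAb Rab]]]].
  exact (nAb (Hinv a b Aa Rab)).
Qed.

(* Conversely, in a quasi-uniformity, if A is far from its complement then
   U_A is an entourage: the entourage separating A from X \ A is below U_A. *)
Lemma U_N_of_not_near {X : Type} (U : rel X -> Prop) (A : X -> Prop) :
  is_quasi_uniformity U -> ~ qprox U A (fun y => ~ A y) -> U (U_N A).
Proof.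
  intros [_ [Hup _]] Hfar.
  apply not_all_ex_not in Hfar as [R HR].
  apply imply_to_and in HR as [HRU Hsep].
  apply (Hup R); [exact HRU|].
  intros x y Rxy. unfold U_N.
  destruct (classic (A x)) as [Ax|nAx]; [left; split; [exact Ax|]|right; exact nAx].
  apply NNPP. intro nAy. apply Hsep. exists x, y. auto.
Qed.

Theorem corollary2p3 (X : Type) (tau : (X -> Prop) -> Prop)
  (Htop : is_topology tau)
  (V : rel X -> Prop) (HV : in_T tau V)
  (W : rel X -> Prop) (HW : is_V_omega V W)
  (alpha : (X -> Prop) -> Prop)
  (Halpha : interior_preserving_open_cover tau alpha)
  (HUa : V (U_alpha alpha)) :
  forall A : X -> Prop, alpha A -> B_of tau W A.
Proof.
  intros A HA.
  destruct HW as [HWqu [Hsame _]].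
  split.
  - exact (proj1 Halpha A HA).
  - apply U_N_of_not_near; [exact HWqu|].
    intro HnearW. apply (Hsame A (fun y => ~ A y)) in HnearW.
    exact (invariant_entourage_not_near V A _ HUa (U_alpha_invariant alpha A HA)
             HnearW).
Qed.
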